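(* Let $n$ be a non-negative integer and $r,s\in\mathbb{C}\setminus\mathbb{Z}^{-}$ with $s\ne0$ and $r-s\notin\mathbb{Z}^{-}$. Then \[ \sum_{k=0}^{n}(-1)^{k}\frac{\binom{n}{k}}{\binom{k+r}{s}}H_k^{(2)}=\frac{s}{r-s+1}\left(\frac{H_n^{(2)}}{\binom{n+r}{r-s+1}}-\sum_{k=1}^{n}\frac{H_n-H_{n-k}}{k\binom{n-k+r}{r-s+1}}\right). \]
   Context: $\mathbb{Z}^{-}$ denotes the set of negative integers. For integers $m\ge0$, $H_m=\sum_{j=1}^m1/j$ and $H_m^{(2)}=\sum_{j=1}^m1/j^2$. Binomial coefficients with complex entries: $\binom{x}{y}=\frac{\Gamma(x+1)}{\Gamma(y+1)\Gamma(x-y+1)}$. *)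

From Stdlib Require Import Reals.
From Coquelicot Require Import Coquelicot.
Open Scope C_scope.

(* m^z for a positive integer m and complex z: exp(z * ln m), written out. *)
Definition cpow_nat (m : nat) (z : C) : C :=
  RtoC (exp (Re z * ln (INR m))) *
  (cos (Im z * ln (INR m)), sin (Im z * ln (INR m))).

(* Gauss's product: m! m^z / (z (z+1) ... (z+m)) *)
Fixpoint cpoch_prod (z : C) (m : nat) : C :=
  match m with
  | O => z
  | S k => cpoch_prod z k * (z + RtoC (INR (S k)))
  end.

Definition gauss_seq (z : C) (m : nat) : C :=
  RtoC (INR (Factorial.fact m)) * cpow_nat m z / cpoch_prod z m.

(* Complex Gamma function, defined as the (componentwise) limit of Gauss's
   sequence; this limit exists for every z outside {0,-1,-2,...}. *)
Definition CGamma (z : C) : C :=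
  (real (Lim_seq (fun m => Re (gauss_seq z m))),
   real (Lim_seq (fun m => Im (gauss_seq z m)))).

Definition cbinom (x y : C) : C :=
  CGamma (x + 1) / (CGamma (y + 1) * CGamma (x - y + 1)).

Definition is_neg_int (z : C) : Prop := exists m : nat, z = RtoC (- INR (S m)).

Fixpoint H (m : nat) : R :=
  match m with O => 0%R | S k => (H k + / INR (S k))%R end.
Fixpoint H2 (m : nat) : R :=
  match m with O => 0%R | S k => (H2 k + / (INR (S k))^2)%R end.

(* Writing T_b(m) = sum_(i<=m) (-1)^i C(m,i) b_i, the identity
   sum_(m<n) (H_n - H_m)/(n-m) C(m,j) = C(n,j) (H2_n - H2_j)
   turns the H2-weighted alternating sum into H2_n T_b(n) - sum_(m<n) (H_n - H_m)/(n-m) T_b(m).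
   For b_k = 1/C(k+r,s) the transform is T_b(m) = s/(r-s+1) / C(m+r,r-s+1): induct on m with
   Pascal's rule T_b(m+1) = T_b(m) - T_(b(.+1))(m) and Gamma(z+1) = z Gamma(z).  For Gamma
   defined as the limit of Gauss's sequence g_z(m), the functional equation comes from
   z g_z(m) = g_(z+1)(m) (1 + (z+1)/m), once we know that g_z converges; it does because
   g_z(m+1)/g_z(m) = 1 + O(1/m^2). *)

From Stdlib Require Import Reals Lra Lia.
From Coquelicot Require Import Coquelicot.
Open Scope C_scope.

Lemma Cinv_0 : / (0 : C) = 0.
Proof. unfold Cinv, Rdiv; simpl. unfold RtoC. f_equal; ring. Qed.

Lemma Cinv_mult_all (a b : C) : / (a * b) = / a * / b.
Proof.
  destruct (Ceq_dec a 0) as [->|Ha]; [rewrite Cmult_0_l, Cinv_0; ring|].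
  destruct (Ceq_dec b 0) as [->|Hb]; [rewrite Cmult_0_r, Cinv_0; ring|].
  field. split; assumption.
Qed.

Lemma Cinv_involutive (a : C) : / / a = a.
Proof.
  destruct (Ceq_dec a 0) as [->|Ha]; [rewrite !Cinv_0; reflexivity|].
  field. assumption.
Qed.

Lemma RtoC_inv_all (x : R) : RtoC (/ x) = / RtoC x.
Proof.
  destruct (Req_dec x 0) as [->|Hx]; [rewrite Rinv_0, Cinv_0; reflexivity|].
  apply RtoC_inv. assumption.
Qed.

Lemma RtoC_div_all (x y : R) : RtoC (x / y) = RtoC x / RtoC y.
Proof. unfold Rdiv, Cdiv. rewrite RtoC_mult, RtoC_inv_all. reflexivity. Qed.

Lemma Cmod_le_Re_Im (w : C) : (Cmod w <= Rabs (Re w) + Rabs (Im w))%R.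
Proof.
  unfold Cmod. rewrite <- (sqrt_pow2 (Rabs (Re w) + Rabs (Im w)))
    by (pose proof (Rabs_pos (Re w)); pose proof (Rabs_pos (Im w)); lra).
  apply sqrt_le_1_alt. unfold Re, Im.
  rewrite <- (pow2_abs (fst w)), <- (pow2_abs (snd w)).
  pose proof (Rabs_pos (fst w)); pose proof (Rabs_pos (snd w)). nra.
Qed.

Lemma Cmod_add_R_ge (z : C) (t : R) : (0 <= t)%R -> (t - Cmod z <= Cmod (z + RtoC t))%R.
Proof.
  intro Ht. pose proof (Cmod_triangle (z + RtoC t) (- z)) as H.
  replace (z + RtoC t + - z) with (RtoC t) in H by ring.
  rewrite Cmod_R, Rabs_right, Cmod_opp in H by lra. lra.
Qed.

Lemma not_neg_int_add (z : C) (j : nat) : ~ is_neg_int z -> z + RtoC (INR (S j)) <> 0.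
Proof.
  intros Hz H. apply Hz. exists j. rewrite RtoC_opp.
  replace z with (z + RtoC (INR (S j)) - RtoC (INR (S j))) by ring. rewrite H. ring.
Qed.

Lemma not_neg_int_succ (z : C) : ~ is_neg_int z -> ~ is_neg_int (z + 1).
Proof.
  intros Hz [m Hm]. apply Hz. exists (S m).
  replace z with (z + 1 - 1) by ring. rewrite Hm, !RtoC_opp, (S_INR (S m)), RtoC_plus. ring.
Qed.

Lemma INR_succ_add (k : nat) (r : C) : RtoC (INR (S k)) + r = RtoC (INR k) + (r + 1).
Proof. rewrite S_INR, RtoC_plus. ring. Qed.

(** * Finite sums and binomial coefficients *)

Open Scope R_scope.

Lemma sum_n_shift {G : AbelianMonoid} (f : nat -> G) (n : nat) :
  sum_n f (S n) = plus (f O) (sum_n (fun m => f (S m)) n).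
Proof. unfold sum_n. rewrite sum_Sn_m by lia. rewrite sum_n_m_S. reflexivity. Qed.

Lemma sum_n_rev {G : AbelianMonoid} (f : nat -> G) (n : nat) :
  sum_n (fun k => f (n - k)%nat) n = sum_n f n.
Proof.
  induction n as [|n IH]; [reflexivity|].
  rewrite sum_n_shift, sum_Sn, plus_comm.
  change (fun m => f (S n - S m)%nat) with (fun m => f (n - m)%nat). rewrite IH. reflexivity.
Qed.

Lemma sum_n_zero_tail {G : AbelianMonoid} (f : nat -> G) (m p : nat) : (m <= p)%nat ->
  (forall i, (m < i)%nat -> f i = zero) -> sum_n f p = sum_n f m.
Proof.
  intros Hmp Hf. replace p with (m + (p - m))%nat by lia.
  induction (p - m)%nat as [|d IH]; [rewrite Nat.add_0_r; reflexivity|].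
  rewrite Nat.add_succ_r, sum_Sn, IH, Hf by lia. apply plus_zero_r.
Qed.

Lemma sum_n_m_1_rev {G : AbelianMonoid} (f : nat -> G) (n : nat) :
  f O = zero -> sum_n_m f 1 n = sum_n (fun k => f (n - k)%nat) n.
Proof.
  intro Hf0. rewrite sum_n_rev. unfold sum_n.
  rewrite (sum_Sn_m f 0 n), Hf0, plus_zero_l by lia. reflexivity.
Qed.

Lemma sum_n_Rext (u v : nat -> R) (n : nat) :
  (forall k, (k <= n)%nat -> u k = v k) -> sum_n u n = sum_n v n.
Proof. apply sum_n_ext_loc. Qed.

Lemma sum_n_Rplus (u v : nat -> R) (n : nat) :
  sum_n (fun k => u k + v k) n = sum_n u n + sum_n v n.
Proof. apply (@sum_n_plus R_AbelianMonoid). Qed.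

Lemma sum_n_Rmult_l (a : R) (u : nat -> R) (n : nat) :
  sum_n (fun k => a * u k) n = a * sum_n u n.
Proof. apply (@sum_n_mult_l R_Ring). Qed.

Lemma sum_n_Rshift (f : nat -> R) (n : nat) :
  sum_n f (S n) = f O + sum_n (fun m => f (S m)) n.
Proof. apply (@sum_n_shift R_AbelianMonoid). Qed.

Lemma sum_n_inv_succ (n : nat) : sum_n (fun m => / INR (S m)) n = H (S n).
Proof.
  induction n as [|n IH]; [rewrite sum_O; simpl; ring|].
  rewrite sum_Sn, IH. reflexivity.
Qed.

(* Unlike [Binomial.C], whose truncated subtraction makes [C n k = n! / k!] for [k > n],
   [binom n k] vanishes for [k > n]. *)
Fixpoint binom (n k : nat) : R :=
  match n, k with
  | _, O => 1
  | O, S _ => 0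
  | S n', S k' => binom n' k' + binom n' (S k')
  end.

Lemma binom_n_0 (n : nat) : binom n 0 = 1.
Proof. destruct n; reflexivity. Qed.

Lemma binom_gt (n k : nat) : (n < k)%nat -> binom n k = 0.
Proof.
  revert k. induction n as [|n IH]; intros [|k] Hk; try lia; [reflexivity|].
  simpl. rewrite !IH by lia. ring.
Qed.

Lemma binom_eq_C (n k : nat) : (k <= n)%nat -> binom n k = Binomial.C n k.
Proof.
  revert k. induction n as [|n IH]; intros [|k] Hk.
  - rewrite C_n_0. reflexivity.
  - lia.
  - rewrite C_n_0. reflexivity.
  - simpl. destruct (Nat.eq_dec k n) as [->|Hne].
    + rewrite (binom_gt n (S n)), IH, !C_n_n by lia. ring.
    + rewrite !IH by lia. apply pascal. lia.
Qed.

Lemma binom_absorb (n j : nat) : INR (S j) * binom (S n) (S j) = INR (S n) * binom n j.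
Proof.
  revert j. induction n as [|n IH]; intros [|j].
  - simpl. ring.
  - simpl. ring.
  - change (binom (S (S n)) 1) with (binom (S n) 0 + binom (S n) 1).
    pose proof (IH O) as H1. rewrite !binom_n_0 in *. rewrite !S_INR in *. simpl in H1 |- *. lra.
  - change (binom (S (S n)) (S (S j))) with (binom (S n) (S j) + binom (S n) (S (S j))).
    rewrite Rmult_plus_distr_l, IH, (S_INR (S j)), Rmult_plus_distr_r, IH.
    change (binom (S n) (S j)) with (binom n j + binom n (S j)).
    rewrite (S_INR (S n)). ring.
Qed.

Lemma binom_succ_r (n j : nat) : INR (S j) * binom n (S j) = (INR n - INR j) * binom n j.
Proof.
  pose proof (binom_absorb n j) as H.
  change (binom (S n) (S j)) with (binom n j + binom n (S j)) in H.
  rewrite !S_INR in *. lra.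
Qed.

Lemma binom_absorb_div (n j : nat) : binom (S n) (S j) / INR (S n) = binom n j / INR (S j).
Proof.
  assert (INR (S n) <> 0) by (apply not_0_INR; lia).
  assert (INR (S j) <> 0) by (apply not_0_INR; lia).
  replace (binom (S n) (S j)) with (INR (S n) * binom n j / INR (S j))
    by (rewrite <- binom_absorb; field; assumption).
  field. split; assumption.
Qed.

Lemma binom_hockey (n j : nat) : sum_n (fun m => binom m j) n = binom (S n) (S j).
Proof.
  induction n as [|n IH]; [rewrite sum_O; destruct j; simpl; ring|].
  rewrite sum_Sn, IH. simpl (binom (S (S n)) (S j)). unfold plus. simpl. ring.
Qed.

Lemma harmonic_quotient_succ (n m : nat) : (m <= n)%nat ->
  (H (S (S n)) - H (S m)) / INR (S (S n) - S m)
  = (H (S n) - H m) / INR (S n - m) - / (INR (S (S n)) * INR (S m)).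
Proof.
  intro Hm. change (S (S n) - S m)%nat with (S n - m)%nat.
  change (H (S (S n))) with (H (S n) + / INR (S (S n))).
  change (H (S m)) with (H m + / INR (S m)).
  assert (INR (S n - m) <> 0) by (apply not_0_INR; lia).
  rewrite minus_INR in * by lia. rewrite !S_INR in *.
  pose proof (pos_INR m). pose proof (pos_INR n).
  field. repeat split; try lra; apply Rgt_not_eq; lra.
Qed.

(* The ascription [: R] makes the equation one in [R] rather than in the carrier of
   [R_AbelianMonoid], so that [ring] and [field] apply. *)
Lemma harmonic_binom_sum_succ (n j : nat) :
  (sum_n (fun m => (H (S n) - H m) / INR (S n - m) * binom m j) n : R)
  = binom (S n) j * (H2 (S n) - H2 j).
Proof.
  revert j. induction n as [|n IH]; intro j.
  - rewrite sum_O. destruct j as [|[|j]]; simpl; [field|field|ring].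
  - rewrite sum_n_Rshift.
    set (q m := (H (S n) - H m) / INR (S n - m)).
    set (c := / INR (S (S n))).
    rewrite (sum_n_Rext _ (fun m => q m * binom (S m) j - c * (binom (S m) j / INR (S m))))
      by (intros m Hm; rewrite harmonic_quotient_succ by exact Hm; unfold q, c, Rdiv;
          rewrite Rinv_mult; ring).
    rewrite Nat.sub_0_r.
    assert (Hn : INR (S (S n)) <> 0) by (apply not_0_INR; lia).
    change (H2 (S (S n))) with (H2 (S n) + / INR (S (S n)) ^ 2).
    destruct j as [|j].
    + rewrite (sum_n_Rext _ (fun m => q m * binom m 0 + (- c) * / INR (S m)))
        by (intros m _; rewrite !binom_n_0; unfold Rdiv; ring).
      rewrite sum_n_Rplus, sum_n_Rmult_l, IH, sum_n_inv_succ, !binom_n_0.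
      change (H (S (S n))) with (H (S n) + / INR (S (S n))).
      unfold c. simpl (H 0). simpl (H2 0). field. exact Hn.
    + assert (Hj : INR (S j) <> 0) by (apply not_0_INR; lia).
      rewrite (sum_n_Rext _ (fun m => q m * binom m j + q m * binom m (S j)
                                     + (- c / INR (S j)) * binom m j)).
      2:{ intros m _. rewrite binom_absorb_div.
          change (binom (S m) (S j)) with (binom m j + binom m (S j)). unfold Rdiv. ring. }
      rewrite !sum_n_Rplus, sum_n_Rmult_l, !IH, binom_hockey.
      change (binom 0 (S j)) with 0.
      change (binom (S (S n)) (S j)) with (binom (S n) j + binom (S n) (S j)).
      change (H2 (S j)) with (H2 j + / INR (S j) ^ 2).
      replace (binom (S n) (S j)) with ((INR (S n) - INR j) * binom (S n) j / INR (S j))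
        by (rewrite <- binom_succ_r; field; exact Hj).
      unfold c. rewrite (S_INR (S n)), (S_INR j) in *. field. split; assumption.
Qed.

(* The extra summand [m = n] is [(H n - H n) / 0 = 0]. *)
Lemma harmonic_binom_sum (n j : nat) :
  (sum_n (fun m => (H n - H m) / INR (n - m) * binom m j) n : R) = binom n j * (H2 n - H2 j).
Proof.
  destruct n as [|n].
  - rewrite sum_O, Rminus_diag. unfold Rdiv. rewrite Rmult_0_l. destruct j; simpl; ring.
  - rewrite sum_Sn, harmonic_binom_sum_succ, Rminus_diag. unfold Rdiv.
    rewrite !Rmult_0_l. apply (@plus_zero_r R_AbelianMonoid).
Qed.

(** * The alternating binomial transform *)

Open Scope C_scope.

Lemma sum_n_Cext (u v : nat -> C) (n : nat) :
  (forall k, (k <= n)%nat -> u k = v k) -> sum_n u n = sum_n v n.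
Proof. apply sum_n_ext_loc. Qed.

Lemma sum_n_Cplus (u v : nat -> C) (n : nat) :
  sum_n (fun k => u k + v k) n = sum_n u n + sum_n v n.
Proof. apply (@sum_n_plus C_AbelianMonoid). Qed.

Lemma sum_n_Cmult_l (a : C) (u : nat -> C) (n : nat) :
  sum_n (fun k => a * u k) n = a * sum_n u n.
Proof. apply (@sum_n_mult_l C_Ring). Qed.

Lemma sum_n_Cminus (u v : nat -> C) (n : nat) :
  (sum_n (fun k => u k - v k) n : C) = sum_n u n - sum_n v n.
Proof.
  rewrite (sum_n_Cext _ (fun k => u k + (-1) * v k)) by (intros; ring).
  rewrite sum_n_Cplus, sum_n_Cmult_l. ring.
Qed.

Lemma sum_n_Cshift (f : nat -> C) (n : nat) :
  sum_n f (S n) = f O + sum_n (fun m => f (S m)) n.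
Proof. apply (@sum_n_shift C_AbelianMonoid). Qed.

Lemma sum_n_RtoC (f : nat -> R) (n : nat) : RtoC (sum_n f n) = sum_n (fun k => RtoC (f k)) n.
Proof.
  induction n as [|n IH]; [rewrite !sum_O; reflexivity|].
  rewrite !sum_Sn, <- IH. apply RtoC_plus.
Qed.

Definition binom_transform (b : nat -> C) (m : nat) : C :=
  sum_n (fun i => RtoC ((-1) ^ i * binom m i) * b i) m.

Lemma binom_transform_ext (b b' : nat -> C) (m : nat) :
  (forall i, b i = b' i) -> binom_transform b m = binom_transform b' m.
Proof. intro Hb. apply sum_n_Cext. intros i _. rewrite Hb. reflexivity. Qed.

Lemma binom_transform_extend (b : nat -> C) (m p : nat) : (m <= p)%nat ->
  binom_transform b m = sum_n (fun i => RtoC ((-1) ^ i * binom m i) * b i) p.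
Proof.
  intro Hmp. symmetry. apply sum_n_zero_tail; [exact Hmp|].
  intros i Hi. rewrite binom_gt, Rmult_0_r by exact Hi. apply Cmult_0_l.
Qed.

Lemma binom_transform_succ (b : nat -> C) (n : nat) :
  binom_transform b (S n) = binom_transform b n - binom_transform (fun i => b (S i)) n.
Proof.
  rewrite (binom_transform_extend b n (S n)) by lia. unfold binom_transform.
  rewrite !sum_n_Cshift.
  rewrite (sum_n_Cext (fun i => RtoC ((-1) ^ S i * binom (S n) (S i)) * b (S i))
             (fun i => RtoC ((-1) ^ S i * binom n (S i)) * b (S i)
                       - RtoC ((-1) ^ i * binom n i) * b (S i))).
  2:{ intros i _. change (binom (S n) (S i)) with (binom n i + binom n (S i))%R.
      replace ((-1) ^ S i * (binom n i + binom n (S i)))%R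
        with ((-1) ^ S i * binom n (S i) - (-1) ^ i * binom n i)%R by (simpl; ring).
      rewrite RtoC_minus. ring. }
  rewrite sum_n_Cminus, !binom_n_0. ring.
Qed.

Lemma binom_transform_H2 (b : nat -> C) (n : nat) :
  (sum_n (fun k => RtoC ((-1) ^ k * binom n k * H2 k) * b k) n : C)
  = RtoC (H2 n) * binom_transform b n
    - sum_n (fun m => RtoC ((H n - H m) / INR (n - m)) * binom_transform b m) n.
Proof.
  assert (Hswap : sum_n (fun m => RtoC ((H n - H m) / INR (n - m)) * binom_transform b m) n
                  = sum_n (fun i => RtoC (binom n i * (H2 n - H2 i)) * (RtoC ((-1) ^ i) * b i)) n).
  { rewrite (sum_n_Cext _ (fun m => sum_n (fun i => RtoC ((H n - H m) / INR (n - m))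
                                             * (RtoC ((-1) ^ i * binom m i) * b i)) n)).
    2:{ intros m Hm. rewrite (binom_transform_extend b m n Hm), sum_n_Cmult_l. reflexivity. }
    rewrite sum_n_switch. apply sum_n_Cext. intros i _.
    rewrite <- harmonic_binom_sum, sum_n_RtoC, Cmult_comm, <- sum_n_Cmult_l.
    apply sum_n_Cext. intros m _. rewrite !RtoC_mult. ring. }
  rewrite Hswap. unfold binom_transform. rewrite <- sum_n_Cmult_l, <- sum_n_Cminus.
  apply sum_n_Cext. intros i _. rewrite !RtoC_mult, RtoC_minus. ring.
Qed.

(** * The complex exponential *)

Open Scope R_scope.

Lemma Rabs_le_inv x b : Rabs x <= b -> - b <= x <= b.
Proof. unfold Rabs; destruct (Rcase_abs x); intros; lra. Qed.

Lemma exp_sub_taylor1_bound x : Rabs x <= /2 -> 0 <= exp x - 1 - x <= 2 * x ^ 2.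
Proof.
  intros Hx%Rabs_le_inv.
  pose proof (exp_ineq1_le x). pose proof (exp_ineq1_le (- x)).
  assert (Hle : exp x <= / (1 - x)).
  { rewrite <- (Rinv_inv (exp x)), <- exp_Ropp. apply Rinv_le_contravar; lra. }
  assert (/ (1 - x) <= 2) by (rewrite <- (Rinv_inv 2); apply Rinv_le_contravar; lra).
  assert (/ (1 - x) - 1 - x = x ^ 2 * / (1 - x)) by (field; lra).
  pose proof (pow2_ge_0 x). split; nra.
Qed.

Lemma cos_sub1_bound x : Rabs x <= 1 -> Rabs (cos x - 1) <= x ^ 2 / 2.
Proof.
  intros Hx%Rabs_le_inv.
  pose proof (pre_cos_bound x 0 ltac:(lra) ltac:(lra)) as [Hlo _].
  replace (cos_approx x (2 * 0 + 1)) with (1 - x * x / 2) in Hlo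
    by (unfold cos_approx, cos_term; simpl; field).
  pose proof (COS_bound x) as [_ Hhi].
  rewrite Rabs_left1 by lra. nra.
Qed.

Lemma sin_sub_id_bound_pos x : 0 <= x <= /2 -> Rabs (sin x - x) <= x ^ 2.
Proof.
  intro Hx.
  pose proof (pre_sin_bound x 0 ltac:(lra) ltac:(lra)) as [Hlo Hhi].
  replace (sin_approx x (2 * 0 + 1)) with (x - x * x * x / 6) in Hlo
    by (unfold sin_approx, sin_term; simpl; field).
  replace (sin_approx x (2 * (0 + 1))) with (x - x * x * x / 6 + x * x * x * x * x / 120) in Hhi
    by (unfold sin_approx, sin_term; simpl; field).
  assert (0 <= x * x * x <= x * x) by (split; nra).
  assert (x * x * x * x * x <= x * x * x) by nra.
  apply Rabs_le. simpl. split; nra.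
Qed.

Lemma sin_sub_id_bound x : Rabs x <= /2 -> Rabs (sin x - x) <= x ^ 2.
Proof.
  intros Hx%Rabs_le_inv. destruct (Rle_dec 0 x).
  - apply sin_sub_id_bound_pos. lra.
  - replace (sin x - x) with (- (sin (- x) - (- x))) by (rewrite sin_neg; ring).
    rewrite Rabs_Ropp. replace (x ^ 2) with ((- x) ^ 2) by ring.
    apply sin_sub_id_bound_pos. lra.
Qed.

Open Scope C_scope.

Definition cexp (w : C) : C := RtoC (exp (Re w)) * (cos (Im w), sin (Im w)).

Lemma cexp_add (v w : C) : cexp (v + w) = cexp v * cexp w.
Proof.
  unfold cexp, Cmult, RtoC, Re, Im; simpl.
  rewrite exp_plus, cos_plus, sin_plus. f_equal; ring.
Qed.

Lemma cexp_RtoC (x : R) : cexp (RtoC x) = RtoC (exp x).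
Proof.
  unfold cexp, Re, Im; simpl. rewrite cos_0, sin_0.
  unfold RtoC, Cmult; simpl. f_equal; ring.
Qed.

Lemma cpow_nat_cexp (m : nat) (z : C) : cpow_nat m z = cexp (z * RtoC (ln (INR m))).
Proof.
  unfold cpow_nat, cexp, Re, Im; simpl.
  replace (fst z * ln (INR m) - snd z * 0)%R with (fst z * ln (INR m))%R by ring.
  replace (fst z * 0 + snd z * ln (INR m))%R with (snd z * ln (INR m))%R by ring.
  reflexivity.
Qed.

Lemma cexp_sub_taylor1_bound (w : C) : (Cmod w <= /2)%R ->
  (Cmod (cexp w - 1 - w) <= 4 * Cmod w ^ 2)%R.
Proof.
  intro Hw.
  set (a := Re w). set (b := Im w).
  assert (Ha : (Rabs a <= /2)%R) by (pose proof (re_le_Cmod w); unfold a; lra).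
  assert (Hb : (Rabs b <= /2)%R).
  { pose proof (Rmax_Cmod w). pose proof (Rmax_r (Rabs (fst w)) (Rabs (snd w))).
    unfold b, Im. lra. }
  pose proof (exp_sub_taylor1_bound a Ha) as Hexp.
  pose proof (cos_sub1_bound b ltac:(lra)) as Hcos.
  pose proof (sin_sub_id_bound b Hb) as Hsin.
  pose proof (exp_pos a).
  assert (Hexp2 : (exp a <= 2)%R) by (apply Rabs_le_inv in Ha; nra).
  assert (Hre : (Rabs (exp a * cos b - 1 - a) <= 2 * a ^ 2 + b ^ 2)%R).
  { replace (exp a * cos b - 1 - a)%R with ((exp a - 1 - a) + exp a * (cos b - 1))%R by ring.
    eapply Rle_trans; [apply Rabs_triang|].
    rewrite Rabs_mult, (Rabs_right (exp a)), (Rabs_right (exp a - 1 - a)) by lra.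
    pose proof (Rabs_pos (cos b - 1)).
    apply Rmult_le_compat with (r1 := exp a) (r2 := 2%R) in Hcos; lra. }
  assert (Him : (Rabs (exp a * sin b - b) <= 3 * Rabs a * Rabs b + b ^ 2)%R).
  { replace (exp a * sin b - b)%R with ((exp a - 1) * sin b + (sin b - b))%R by ring.
    eapply Rle_trans; [apply Rabs_triang|]. rewrite Rabs_mult.
    assert (Rabs (exp a - 1) <= 2 * Rabs a)%R.
    { rewrite <- pow2_abs in Hexp. apply Rabs_le.
      pose proof (Rabs_le_inv a (Rabs a) (Rle_refl _)). pose proof (Rabs_pos a). nra. }
    assert (Rabs (sin b) <= 3 / 2 * Rabs b)%R.
    { rewrite <- pow2_abs in Hsin. pose proof (Rabs_triang (sin b - b) b).
      replace (sin b - b + b)%R with (sin b) in * by ring. pose proof (Rabs_pos b). nra. }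
    pose proof (Rabs_pos a). pose proof (Rabs_pos (sin b)). nra. }
  eapply Rle_trans; [apply Cmod_le_Re_Im|].
  replace (Re (cexp w - 1 - w)) with (exp a * cos b - 1 - a)%R
    by (unfold cexp, a, b, Re, Im; simpl; ring).
  replace (Im (cexp w - 1 - w)) with (exp a * sin b - b)%R
    by (unfold cexp, a, b, Re, Im; simpl; ring).
  rewrite Cmod2_alt. fold a b.
  assert (2 * Rabs a * Rabs b <= a ^ 2 + b ^ 2)%R.
  { rewrite <- (pow2_abs a), <- (pow2_abs b). pose proof (pow2_ge_0 (Rabs a - Rabs b)). nra. }
  nra.
Qed.

(** * Convergence of Gauss's sequence *)

Open Scope R_scope.

Lemma ln_succ_sub_bounds (x : R) : 0 < x ->
  0 < ln (x + 1) - ln x <= / x /\ 1 <= (x + 1) * (ln (x + 1) - ln x).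
Proof.
  intro Hx. set (L := ln (x + 1) - ln x).
  assert (EL : exp L = (x + 1) / x).
  { unfold L, Rminus. rewrite exp_plus, exp_Ropp, !exp_ln by lra. reflexivity. }
  assert (Hup : L < / x).
  { apply exp_lt_inv. rewrite EL. replace ((x + 1) / x) with (1 + / x) by (field; lra).
    apply exp_ineq1. apply Rgt_not_eq, Rinv_0_lt_compat; lra. }
  assert (Hlo : / (x + 1) < L).
  { apply Ropp_lt_cancel, exp_lt_inv. rewrite exp_Ropp, EL.
    replace (/ ((x + 1) / x)) with (1 + - / (x + 1)) by (field; lra).
    apply exp_ineq1. apply Rlt_not_eq, Ropp_lt_gt_0_contravar, Rinv_0_lt_compat; lra. }
  assert (0 < / (x + 1)) by (apply Rinv_0_lt_compat; lra).
  split; [lra|].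
  apply Rmult_lt_compat_l with (r := x + 1) in Hlo; [|lra].
  rewrite Rinv_r in Hlo by lra. lra.
Qed.

Lemma gauss_ratio_bound_arith (a x : R) : 0 <= a -> 1 <= x ->
  ((x + 1) * (4 * (a * / x) ^ 2) + a * / x) * (2 / (x + 1))
  <= (16 * a ^ 2 + 2 * a) / (x * (x + 1)).
Proof.
  intros Ha Hx.
  replace (((x + 1) * (4 * (a * / x) ^ 2) + a * / x) * (2 / (x + 1)))
    with ((16 * a ^ 2 + 2 * a) / (x * (x + 1)) - 8 * a ^ 2 * (x - 1) / (x ^ 2 * (x + 1)))
    by (field; lra).
  assert (0 <= 8 * a ^ 2 * (x - 1) / (x ^ 2 * (x + 1))).
  { apply Rle_mult_inv_pos; [|apply Rmult_lt_0_compat; nra]. pose proof (pow2_ge_0 a). nra. }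
  lra.
Qed.

Lemma Rinv_INR_ge_0 (n : nat) : 0 <= / INR n.
Proof.
  destruct n as [|n]; [simpl; rewrite Rinv_0; lra|].
  left. apply Rinv_0_lt_compat, lt_0_INR. lia.
Qed.

Lemma ex_finite_lim_seq_dominated_increments (u v : nat -> R) :
  (forall m, 0 <= v m) -> (forall m, Rabs (u (S m) - u m) <= v m - v (S m)) ->
  ex_finite_lim_seq u.
Proof.
  intros Hv0 Hd.
  assert (Hinc : forall m, - (v m - v (S m)) <= u (S m) - u m <= v m - v (S m))
    by (intro m; apply Rabs_le_inv, Hd).
  assert (Hlow : forall m, u O - v O <= u m - v m).
  { induction m as [|m IH]; [lra|]. pose proof (Hinc m). lra. }
  destruct (ex_finite_lim_seq_decr v 0) as [lv Hv].
  { intro m. pose proof (Hinc m). lra. }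
  { exact Hv0. }
  destruct (ex_finite_lim_seq_decr (fun m => u m + v m) (u O - v O)) as [lw Hw].
  { intro m. pose proof (Hinc m). lra. }
  { intro m. pose proof (Hlow m). pose proof (Hv0 m). lra. }
  exists (lw - lv).
  apply is_lim_seq_ext with (fun m => u m + v m - v m); [intro; ring|].
  apply is_lim_seq_minus'; assumption.
Qed.

Open Scope C_scope.

Definition is_lim_seqC (u : nat -> C) (l : C) : Prop :=
  is_lim_seq (fun m => Re (u m)) (Re l) /\ is_lim_seq (fun m => Im (u m)) (Im l).

Lemma is_lim_seqC_unique (u : nat -> C) (l1 l2 : C) :
  is_lim_seqC u l1 -> is_lim_seqC u l2 -> l1 = l2.
Proof.
  intros [Hr1 Hi1] [Hr2 Hi2].
  pose proof (is_lim_seq_unique _ _ Hr1) as Er. rewrite (is_lim_seq_unique _ _ Hr2) in Er.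
  pose proof (is_lim_seq_unique _ _ Hi1) as Ei. rewrite (is_lim_seq_unique _ _ Hi2) in Ei.
  injection Er as Er. injection Ei as Ei.
  apply injective_projections; symmetry; assumption.
Qed.

Lemma is_lim_seqC_ext_loc (u v : nat -> C) (l : C) :
  eventually (fun m => u m = v m) -> is_lim_seqC u l -> is_lim_seqC v l.
Proof.
  intros [N HN] [Hr Hi].
  split; [eapply is_lim_seq_ext_loc, Hr|eapply is_lim_seq_ext_loc, Hi];
    exists N; intros m Hm; rewrite HN by exact Hm; reflexivity.
Qed.

Lemma is_lim_seqC_const (c : C) : is_lim_seqC (fun _ => c) c.
Proof. split; apply is_lim_seq_const. Qed.

Lemma is_lim_seqC_RtoC (x : nat -> R) (l : R) :
  is_lim_seq x l -> is_lim_seqC (fun m => RtoC (x m)) (RtoC l).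
Proof. intro H. split; [exact H|apply is_lim_seq_const]. Qed.

Lemma is_lim_seqC_plus (u v : nat -> C) (lu lv : C) :
  is_lim_seqC u lu -> is_lim_seqC v lv -> is_lim_seqC (fun m => u m + v m) (lu + lv).
Proof. intros [Hur Hui] [Hvr Hvi]. split; apply is_lim_seq_plus'; assumption. Qed.

Lemma is_lim_seqC_mult (u v : nat -> C) (lu lv : C) :
  is_lim_seqC u lu -> is_lim_seqC v lv -> is_lim_seqC (fun m => u m * v m) (lu * lv).
Proof.
  intros [Hur Hui] [Hvr Hvi].
  split; [apply is_lim_seq_minus'|apply is_lim_seq_plus']; apply is_lim_seq_mult'; assumption.
Qed.

(* The weight [Cmod (g m) * exp (K / m)] is nonincreasing, since [1 + x <= exp x]. *)
Lemma Cmod_bounded_of_ratio (g q : nat -> C) (M : nat) (K : R) : (0 <= K)%R ->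
  (forall m, g (S m) = g m * q m) ->
  (forall m, (M <= m)%nat -> Cmod (q m - 1) <= K * (/ INR m - / INR (S m)))%R ->
  forall m, (M <= m)%nat -> (Cmod (g m) <= Cmod (g M) * exp (K / INR M))%R.
Proof.
  intros HK Hg Hq.
  assert (Hw : forall k, (Cmod (g (k + M)%nat) * exp (K / INR (k + M))
                          <= Cmod (g M) * exp (K / INR M))%R).
  { induction k as [|k IH]; [apply Rle_refl|].
    eapply Rle_trans; [|exact IH]. simpl (S k + M)%nat.
    set (m := (k + M)%nat). rewrite Hg, Cmod_mult, Rmult_assoc.
    apply Rmult_le_compat_l; [apply Cmod_ge_0|].
    assert (Hqm : (Cmod (q m) <= exp (K / INR m - K / INR (S m)))%R).
    { replace (q m) with ((q m - 1) + 1) by ring.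
      eapply Rle_trans; [apply Cmod_triangle|]. rewrite Cmod_1.
      eapply Rle_trans; [|apply exp_ineq1_le].
      pose proof (Hq m ltac:(unfold m; lia)). unfold Rdiv. lra. }
    replace (exp (K / INR m)) with (exp (K / INR m - K / INR (S m)) * exp (K / INR (S m)))%R
      by (rewrite <- exp_plus; f_equal; ring).
    apply Rmult_le_compat_r; [left; apply exp_pos|exact Hqm]. }
  intros m Hm. replace m with (m - M + M)%nat by lia.
  eapply Rle_trans; [|apply Hw].
  rewrite <- (Rmult_1_r (Cmod _)) at 1.
  apply Rmult_le_compat_l; [apply Cmod_ge_0|].
  pose proof (exp_ineq1_le (K / INR (m - M + M))).
  pose proof (Rmult_le_pos _ _ HK (Rinv_INR_ge_0 (m - M + M))). unfold Rdiv in *. lra.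
Qed.

Lemma is_lim_seqC_of_ratio (g q : nat -> C) (M : nat) (K : R) : (0 <= K)%R ->
  (forall m, g (S m) = g m * q m) ->
  (forall m, (M <= m)%nat -> Cmod (q m - 1) <= K * (/ INR m - / INR (S m)))%R ->
  exists l, is_lim_seqC g l.
Proof.
  intros HK Hg Hq.
  set (B := (Cmod (g M) * exp (K / INR M))%R).
  assert (HB0 : (0 <= B)%R) by (apply Rmult_le_pos; [apply Cmod_ge_0|left; apply exp_pos]).
  assert (Hd : forall m, (M <= m)%nat ->
            (Cmod (g (S m) - g m) <= B * K * (/ INR m - / INR (S m)))%R).
  { intros m Hm. rewrite Hg. replace (g m * q m - g m) with (g m * (q m - 1)) by ring.
    rewrite Cmod_mult, Rmult_assoc.
    apply Rmult_le_compat; [apply Cmod_ge_0|apply Cmod_ge_0|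
                            apply (Cmod_bounded_of_ratio g q M K)|]; auto. }
  assert (Hpart : forall f : C -> R, (forall w, Rabs (f w) <= Cmod w)%R ->
            (forall v w, f (v - w) = (f v - f w)%R) ->
            exists l : R, is_lim_seq (fun m => f (g m)) l).
  { intros f Hf Hlin.
    destruct (ex_finite_lim_seq_dominated_increments (fun n => f (g (n + M)%nat))
                (fun n => B * K * / INR (n + M))%R) as [l Hl].
    - intro n. apply Rmult_le_pos; [apply Rmult_le_pos; assumption|apply Rinv_INR_ge_0].
    - intro n. simpl (S n + M)%nat. rewrite <- Hlin.
      eapply Rle_trans; [apply Hf|]. rewrite <- Rmult_minus_distr_l. apply Hd. lia.
    - exists l. apply (is_lim_seq_incr_n _ M). exact Hl. }
  destruct (Hpart Re re_le_Cmod) as [l1 H1]; [intros; unfold Re; simpl; ring|].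
  destruct (Hpart Im) as [l2 H2].
  { intro w. eapply Rle_trans; [apply Rmax_r|apply Rmax_Cmod]. }
  { intros; unfold Im; simpl; ring. }
  exists (l1, l2). split; assumption.
Qed.

Definition gauss_ratio (z : C) (m : nat) : C :=
  RtoC (INR (S m)) * cexp (z * RtoC (ln (INR (S m)) - ln (INR m))) / (z + RtoC (INR (S m))).

Lemma gauss_seq_succ (z : C) (m : nat) : gauss_seq z (S m) = gauss_seq z m * gauss_ratio z m.
Proof.
  unfold gauss_seq, gauss_ratio, Cdiv. rewrite !cpow_nat_cexp.
  replace (z * RtoC (ln (INR (S m))))
    with (z * RtoC (ln (INR m)) + z * RtoC (ln (INR (S m)) - ln (INR m)))
    by (rewrite RtoC_minus; ring).
  rewrite cexp_add.
  change (cpoch_prod z (S m)) with (cpoch_prod z m * (z + RtoC (INR (S m)))).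
  change (Factorial.fact (S m)) with (S m * Factorial.fact m)%nat.
  rewrite mult_INR, RtoC_mult, Cinv_mult_all. ring.
Qed.

Lemma gauss_ratio_sub1 (z : C) (m : nat) : z + RtoC (INR (S m)) <> 0 ->
  let t := INR (S m) in let L := (ln t - ln (INR m))%R in
  gauss_ratio z m - 1
  = (RtoC t * (cexp (z * RtoC L) - 1 - z * RtoC L) + z * RtoC (t * L - 1)) / (z + RtoC t).
Proof.
  intros HD t L. unfold gauss_ratio. fold t L. rewrite RtoC_minus, RtoC_mult.
  field. exact HD.
Qed.

Lemma gauss_ratio_numerator_bound (z : C) (m : nat) : (2 * Cmod z + 1 <= INR m)%R ->
  let t := INR (S m) in let L := (ln t - ln (INR m))%R in
  (Cmod (RtoC t * (cexp (z * RtoC L) - 1 - z * RtoC L) + z * RtoC (t * L - 1))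
   <= t * (4 * (Cmod z * / INR m) ^ 2) + Cmod z * / INR m)%R.
Proof.
  intros Hm t L. pose proof (Cmod_ge_0 z) as Ha.
  assert (Ht : t = (INR m + 1)%R) by apply S_INR.
  destruct (ln_succ_sub_bounds (INR m) ltac:(lra)) as [[HL0 HL1] HtL].
  rewrite <- Ht in HL0, HL1, HtL. fold L in HL0, HL1, HtL.
  assert (HaL : (Cmod z * L <= Cmod z * / INR m <= /2)%R).
  { split; [apply Rmult_le_compat_l; lra|].
    apply Rmult_le_reg_r with (INR m); [lra|]. rewrite Rmult_assoc, Rinv_l by lra. lra. }
  assert (Hw : (Cmod (cexp (z * RtoC L) - 1 - z * RtoC L) <= 4 * (Cmod z * / INR m) ^ 2)%R).
  { rewrite <- (Rabs_right L) in HaL by lra. rewrite <- Cmod_R, <- Cmod_mult in HaL.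
    eapply Rle_trans; [apply cexp_sub_taylor1_bound; lra|].
    apply Rmult_le_compat_l; [lra|]. apply pow_incr. split; [apply Cmod_ge_0|apply HaL]. }
  assert (HtL1 : (Rabs (t * L - 1) <= / INR m)%R).
  { assert (t * L <= t * / INR m)%R by (apply Rmult_le_compat_l; lra).
    replace (t * / INR m)%R with (1 + / INR m)%R in * by (rewrite Ht; field; lra).
    rewrite Rabs_right; lra. }
  eapply Rle_trans; [apply Cmod_triangle|]. rewrite !Cmod_mult, !Cmod_R, (Rabs_right t) by lra.
  pose proof (Rabs_pos (t * L - 1)). pose proof (Cmod_ge_0 (cexp (z * RtoC L) - 1 - z * RtoC L)).
  apply Rplus_le_compat; apply Rmult_le_compat_l; lra.
Qed.

Lemma gauss_ratio_bound (z : C) (m : nat) : (2 * Cmod z + 1 <= INR m)%R ->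
  (Cmod (gauss_ratio z m - 1) <= (16 * Cmod z ^ 2 + 2 * Cmod z) / (INR m * INR (S m)))%R.
Proof.
  intro Hm. pose proof (Cmod_ge_0 z).
  assert (Ht : INR (S m) = (INR m + 1)%R) by apply S_INR.
  assert (HD : (INR (S m) / 2 <= Cmod (z + RtoC (INR (S m))))%R)
    by (pose proof (Cmod_add_R_ge z (INR (S m)) (pos_INR _)); lra).
  assert (HD0 : z + RtoC (INR (S m)) <> 0) by (intros H0; rewrite H0, Cmod_0 in HD; lra).
  assert (HiD : (/ Cmod (z + RtoC (INR (S m))) <= 2 / INR (S m))%R).
  { replace (2 / INR (S m))%R with (/ (INR (S m) / 2))%R by (field; lra).
    apply Rinv_le_contravar; lra. }
  rewrite gauss_ratio_sub1 by exact HD0. unfold Cdiv.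
  rewrite Cmod_mult, Cmod_inv by exact HD0.
  eapply Rle_trans.
  { apply Rmult_le_compat; [apply Cmod_ge_0|left; apply Rinv_0_lt_compat; lra| |exact HiD].
    apply gauss_ratio_numerator_bound, Hm. }
  rewrite Ht. apply gauss_ratio_bound_arith; lra.
Qed.

Lemma gauss_seq_converges (z : C) : exists l, is_lim_seqC (gauss_seq z) l.
Proof.
  destruct (INR_unbounded (2 * Cmod z + 1)) as [N HN].
  pose proof (Cmod_ge_0 z).
  apply (is_lim_seqC_of_ratio _ (gauss_ratio z) N (16 * Cmod z ^ 2 + 2 * Cmod z)).
  - pose proof (pow2_ge_0 (Cmod z)). lra.
  - apply gauss_seq_succ.
  - intros m Hm. assert (INR N <= INR m)%R by (apply le_INR; exact Hm).
    eapply Rle_trans; [apply gauss_ratio_bound; lra|].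
    right. rewrite S_INR. field. lra.
Qed.

Lemma CGamma_is_lim (z : C) : is_lim_seqC (gauss_seq z) (CGamma z).
Proof.
  destruct (gauss_seq_converges z) as [l [Hr Hi]].
  replace (CGamma z) with l; [split; assumption|].
  unfold CGamma. rewrite (is_lim_seq_unique _ _ Hr), (is_lim_seq_unique _ _ Hi).
  apply surjective_pairing.
Qed.

(** * The functional equation of Gamma *)

Lemma cpow_nat_succ_exponent (m : nat) (z : C) : (1 <= m)%nat ->
  cpow_nat m (z + 1) = RtoC (INR m) * cpow_nat m z.
Proof.
  intro Hm. rewrite !cpow_nat_cexp.
  replace ((z + 1) * RtoC (ln (INR m))) with (z * RtoC (ln (INR m)) + RtoC (ln (INR m)))
    by ring.
  rewrite cexp_add, cexp_RtoC, exp_ln by (apply lt_0_INR; lia). ring.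
Qed.

Lemma cpoch_prod_succ (z : C) (m : nat) : z * cpoch_prod (z + 1) m = cpoch_prod z (S m).
Proof.
  induction m as [|m IH].
  - reflexivity.
  - change (cpoch_prod z (S (S m))) with (cpoch_prod z (S m) * (z + RtoC (INR (S (S m))))).
    change (cpoch_prod (z + 1) (S m)) with (cpoch_prod (z + 1) m * (z + 1 + RtoC (INR (S m)))).
    rewrite <- IH, (S_INR (S m)), RtoC_plus. ring.
Qed.

Lemma gauss_seq_shift (z : C) (m : nat) :
  z <> 0 -> (1 <= m)%nat -> z + RtoC (INR (S m)) <> 0 ->
  z * gauss_seq z m = gauss_seq (z + 1) m * (1 + (z + 1) * RtoC (/ INR m)).
Proof.
  intros Hz Hm HD.
  assert (Hm0 : INR m <> 0%R) by (apply not_0_INR; lia).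
  assert (Hpoch : cpoch_prod z m = z * cpoch_prod (z + 1) m / (z + RtoC (INR (S m)))).
  { rewrite cpoch_prod_succ.
    change (cpoch_prod z (S m)) with (cpoch_prod z m * (z + RtoC (INR (S m)))).
    field. exact HD. }
  unfold gauss_seq, Cdiv. rewrite cpow_nat_succ_exponent by exact Hm.
  rewrite Hpoch. unfold Cdiv. rewrite !Cinv_mult_all, Cinv_involutive.
  set (iP := / cpoch_prod (z + 1) m).
  rewrite S_INR, RtoC_plus, RtoC_inv by exact Hm0.
  field. split; [|exact Hz]. intro H0. apply RtoC_inj in H0. contradiction.
Qed.

Lemma CGamma_succ (z : C) : z <> 0 -> CGamma (z + 1) = z * CGamma z.
Proof.
  intro Hz.
  destruct (INR_unbounded (Cmod z)) as [N HN].
  assert (Hev : eventually (fun m => gauss_seq (z + 1) m * (1 + (z + 1) * RtoC (/ INR m))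
                                     = z * gauss_seq z m)).
  { exists (S N). intros m Hm. symmetry. apply gauss_seq_shift; [exact Hz|lia|].
    intro H0. pose proof (Cmod_add_R_ge z (INR (S m)) (pos_INR _)) as H1.
    rewrite H0, Cmod_0 in H1. assert (INR N <= INR (S m))%R by (apply le_INR; lia). lra. }
  assert (Hinv : is_lim_seq (fun m => / INR m)%R 0%R)
    by exact (is_lim_seq_inv INR p_infty is_lim_seq_INR ltac:(discriminate)).
  assert (Hlhs : is_lim_seqC (fun m => gauss_seq (z + 1) m * (1 + (z + 1) * RtoC (/ INR m)))
                   (CGamma (z + 1) * (1 + (z + 1) * RtoC 0))).
  { apply is_lim_seqC_mult; [apply CGamma_is_lim|].
    apply is_lim_seqC_plus; [apply is_lim_seqC_const|].
    apply is_lim_seqC_mult; [apply is_lim_seqC_const|apply is_lim_seqC_RtoC, Hinv]. }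
  assert (Hrhs : is_lim_seqC (fun m => z * gauss_seq z m) (z * CGamma z))
    by (apply is_lim_seqC_mult; [apply is_lim_seqC_const|apply CGamma_is_lim]).
  rewrite <- (is_lim_seqC_unique _ _ _ (is_lim_seqC_ext_loc _ _ _ Hev Hlhs) Hrhs). ring.
Qed.

(** * Inverse binomial coefficients *)

Lemma inv_cbinom (x y : C) :
  / cbinom x y = CGamma (y + 1) * CGamma (x - y + 1) * / CGamma (x + 1).
Proof. unfold cbinom, Cdiv. rewrite Cinv_mult_all, Cinv_involutive. ring. Qed.

Lemma inv_cbinom_complement (x s : C) : s <> 0 -> x - s + 1 <> 0 ->
  / cbinom x s = s / (x - s + 1) * / cbinom x (x - s + 1).
Proof.
  intros Hs Hxs. rewrite !inv_cbinom.
  replace (x - (x - s + 1) + 1) with s by ring.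
  rewrite (CGamma_succ s Hs), (CGamma_succ (x - s + 1) Hxs).
  (* [CGamma (x + 1)] may vanish, so its inverse is kept as an opaque factor. *)
  set (iG := / CGamma (x + 1)). field. exact Hxs.
Qed.

Lemma inv_cbinom_pascal (x a : C) : x + 1 <> 0 -> a + 1 <> 0 -> x - a + 1 <> 0 ->
  / cbinom x a - a / (a + 1) * / cbinom (x + 1) (a + 1) = / cbinom (x + 1) a.
Proof.
  intros Hx Ha Hxa. rewrite !inv_cbinom.
  replace (x + 1 - (a + 1) + 1) with (x - a + 1) by ring.
  replace (x + 1 - a + 1) with (x - a + 1 + 1) by ring.
  rewrite (CGamma_succ (a + 1) Ha), (CGamma_succ (x + 1) Hx), (CGamma_succ (x - a + 1) Hxa).
  rewrite Cinv_mult_all. set (iG := / CGamma (x + 1)). field. split; assumption.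
Qed.

Lemma binom_transform_inv_cbinom (r s : C) (n : nat) :
  s <> 0 -> ~ is_neg_int s -> ~ is_neg_int r -> ~ is_neg_int (r - s) ->
  binom_transform (fun k => / cbinom (RtoC (INR k) + r) s) n
  = s / (r - s + 1) * / cbinom (RtoC (INR n) + r) (r - s + 1).
Proof.
  intros Hs0 Hs. revert r. induction n as [|n IH]; intros r Hr Hrs;
    (assert (Ha : r - s + 1 <> 0) by exact (not_neg_int_add (r - s) 0 Hrs)).
  - unfold binom_transform. rewrite sum_O.
    change (INR 0) with 0%R. rewrite !Cplus_0_l.
    change ((-1) ^ 0 * binom 0 0)%R with (1 * 1)%R. rewrite Rmult_1_l, Cmult_1_l.
    apply inv_cbinom_complement; assumption.
  - rewrite binom_transform_succ. cbv beta.
    rewrite (binom_transform_ext (fun i => / cbinom (RtoC (INR (S i)) + r) s)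
               (fun k => / cbinom (RtoC (INR k) + (r + 1)) s))
      by (intro i; rewrite INR_succ_add; reflexivity).
    assert (Hrs1 : ~ is_neg_int (r + 1 - s))
      by (replace (r + 1 - s) with (r - s + 1) by ring; apply not_neg_int_succ, Hrs).
    rewrite (IH r Hr Hrs), (IH (r + 1) (not_neg_int_succ r Hr) Hrs1).
    set (x := RtoC (INR n) + r). set (a := r - s + 1).
    replace (RtoC (INR n) + (r + 1)) with (x + 1) by (unfold x; ring).
    replace (r + 1 - s + 1) with (a + 1) by (unfold a; ring).
    replace (RtoC (INR (S n)) + r) with (x + 1) by (unfold x; rewrite INR_succ_add; ring).
    assert (Hx1 : x + 1 <> 0).
    { replace (x + 1) with (r + RtoC (INR (S n))) by (unfold x; rewrite S_INR, RtoC_plus; ring).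
      apply not_neg_int_add, Hr. }
    assert (Ha1 : a + 1 <> 0).
    { replace (a + 1) with (r - s + RtoC (INR 2)) by (unfold a; simpl; rewrite RtoC_plus; ring).
      apply not_neg_int_add, Hrs. }
    assert (Hxa : x - a + 1 <> 0).
    { replace (x - a + 1) with (s + RtoC (INR n)) by (unfold x, a; ring).
      destruct n as [|j]; [change (INR 0) with 0%R; rewrite Cplus_0_r; exact Hs0|].
      apply not_neg_int_add, Hs. }
    rewrite <- (inv_cbinom_pascal x a Hx1 Ha1 Hxa).
    set (ib := / cbinom x a). set (ib' := / cbinom (x + 1) (a + 1)).
    field. split; assumption.
Qed.

Theorem theorem18 (n : nat) (r s : C)
  (hr : ~ is_neg_int r) (hs : ~ is_neg_int s) (hs0 : s <> 0)
  (hrs : ~ is_neg_int (r - s)) :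
  sum_n (fun k => RtoC ((-1) ^ k)%R * RtoC (Binomial.C n k)
                   / cbinom (RtoC (INR k) + r) s * RtoC (H2 k)) n
  = s / (r - s + 1) *
    (RtoC (H2 n) / cbinom (RtoC (INR n) + r) (r - s + 1)
     - sum_n_m (fun k => RtoC (H n - H (n - k))%R
                 / (RtoC (INR k) * cbinom (RtoC (INR (n - k)) + r) (r - s + 1)))
               1 n).
Proof.
  set (b k := / cbinom (RtoC (INR k) + r) s).
  set (ib m := / cbinom (RtoC (INR m) + r) (r - s + 1)).
  assert (Hb : forall m, binom_transform b m = s / (r - s + 1) * ib m)
    by (intro m; apply binom_transform_inv_cbinom; assumption).
  rewrite (sum_n_Cext _ (fun k => RtoC ((-1) ^ k * binom n k * H2 k) * b k)).
  2:{ intros k Hk. rewrite binom_eq_C by exact Hk. unfold b, Cdiv. rewrite !RtoC_mult. ring. }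
  rewrite binom_transform_H2, Hb.
  rewrite (sum_n_Cext _ (fun m => s / (r - s + 1) * (RtoC ((H n - H m) / INR (n - m)) * ib m)))
    by (intros m _; rewrite Hb; ring).
  rewrite sum_n_Cmult_l, sum_n_m_1_rev.
  (* The summand [k = 0] of the right-hand side is [x / 0 = 0]. *)
  2:{ change (INR 0) with 0%R. unfold Cdiv. rewrite Cmult_0_l, Cinv_0. apply Cmult_0_r. }
  rewrite (sum_n_Cext (fun k => RtoC (H n - H (n - (n - k))) / (RtoC (INR (n - k))
                        * cbinom (RtoC (INR (n - (n - k))) + r) (r - s + 1)))
             (fun m => RtoC ((H n - H m) / INR (n - m)) * ib m)).
  2:{ intros m Hm. replace (n - (n - m))%nat with m by lia.
      unfold ib, Cdiv. rewrite RtoC_div_all, Cinv_mult_all. unfold Cdiv. ring. }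
  (* [sum_n] types the equation in the carrier of [C_AbelianMonoid]; [ring] wants [C]. *)
  match goal with |- ?lhs = ?rhs => change (@eq C lhs rhs) end.
  unfold ib, Cdiv. ring.
Qed.
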